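(* Let $n\to\infty$, and let $N=N(n)\ge 3n$ and $p=p(n)$ be such that \[\beta=\frac{\frac{1}{np}\log\frac Nn}{\log\left(\frac{1}{np}\log\frac Nn\right)}>1,\] and let $m=8\beta n^2p$. Then asymptotically almost surely, for every two disjoint sets $S,T\subseteq[N]$ with $|S|=|T|=n$, the number of edges of $G\sim G(N,p)$ contained in $S\cup T$ and having at least one endpoint in $S$ is at most $m$.
   Context: $G(N,p)$ denotes the Erdős–Rényi random graph on vertex set $[N]$ in which each pair is an edge independently with probability $p$. All logarithms are natural. ''Asymptotically almost surely'' means with probability tending to $1$ as $n\to\infty$. *)

From HB Require Import structures.
From mathcomp Require Import all_boot all_order all_algebra.
From mathcomp Require Import reals exp topology normedtype sequences.
Unset Printing Implicit Defensive.
Import Order.TTheory GRing.Theory Num.Theory.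
Local Open Scope ring_scope.

(* Vertex set [N] is 'I_N; an (undirected simple) graph on [N] is its edge set,
   a set of 2-element subsets of 'I_N. *)
Definition pairs (N : nat) : {set {set 'I_N}} := [set e : {set 'I_N} | #|e| == 2%N].

(* Probability that G(N,p) satisfies the event A: each of the C(N,2) pairs is an
   edge independently with probability p. *)
Definition gnp_prob {R : realType} (N : nat) (p : R)
    (A : pred {set {set 'I_N}}) : R :=
  \sum_(E : {set {set 'I_N}} | (E \subset pairs N) && A E)
     p ^+ #|E| * (1 - p) ^+ (#|pairs N| - #|E|).

Definition edges_touching (N : nat) (E : {set {set 'I_N}}) (S T : {set 'I_N})
  : {set {set 'I_N}} :=
  [set e in E | (e \subset S :|: T) && (e :&: S != set0)].

Definition good_event {R : realType} (N n : nat) (m : R) : pred {set {set 'I_N}} :=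
  fun E => [forall S : {set 'I_N}, forall T : {set 'I_N},
     ([disjoint S & T] && (#|S| == n) && (#|T| == n)) ==>
       ((#|edges_touching N E S T|)%:R <= m)].

Definition beta_par {R : realType} (N n : nat) (p : R) : R :=
  let x := (n%:R * p)^-1 * ln (N%:R / n%:R) in x / ln x.

From HB Require Import structures.
From mathcomp Require Import all_boot all_order all_algebra.
From mathcomp Require Import reals exp topology normedtype sequences.
From mathcomp Require Import zify ring lra.
Import Order.TTheory GRing.Theory Num.Theory numFieldNormedType.Exports.
Local Open Scope classical_set_scope.
Local Open Scope ring_scope.

(* Union bound over the at most C(N,n)^2 pairs (S,T).  The edges counted for
   (S,T) lie among at most 2n^2 pairs of S :|: T, so more than m of them are
   present with probability at most C(2n^2,k) p^k <= (e 2n^2 p / m)^k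
   = (e / 4 beta)^k, where k = floor m + 1.  As beta = x / ln x with
   x = ln(N/n) / (np), we get e / 4 beta <= x^(-3/4), and k (3/4) ln x exceeds
   m (3/4) ln x = 6 n ln(N/n); so each term is at most (N/n)^(-6n), whereas
   C(N,n)^2 <= (eN/n)^(2n).  The failure probability is therefore at most
   (e^2 (n/N)^4)^n <= (e^2/81)^n, which tends to 0. *)

Section SubsetSums.
Variable R : comPzSemiRingType.

Lemma sum_subsets_exprD (T : finType) (A : {set T}) (a b : R) :
  \sum_(E : {set T} | E \subset A) a ^+ #|E| * b ^+ (#|A| - #|E|) = (a + b) ^+ #|A|.
Proof.
rewrite addrC exprDn (partition_big (fun E : {set T} => inord #|E| : 'I_#|A|.+1) predT) //=.
apply: eq_bigr => j _.
rewrite (eq_bigl [in [set E : {set T} | E \subset A & #|E| == j]]); last first.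
  move=> E; rewrite !inE; apply/andP/andP => [[EA /eqP <-]|[EA /eqP Ej]]; split => //.
    by rewrite inordK // ltnS subset_leq_card.
  by apply/eqP/val_inj; rewrite /= Ej inordK.
rewrite (eq_bigr (fun _ => b ^+ (#|A| - j) * a ^+ j)) ?sumr_const ?cards_draws //.
by move=> E; rewrite inE => /andP[_ /eqP ->]; rewrite mulrC.
Qed.

Lemma sum_supsets_exprD (T : finType) (A K : {set T}) (a b : R) : K \subset A ->
  \sum_(E : {set T} | (E \subset A) && (K \subset E)) a ^+ #|E| * b ^+ (#|A| - #|E|)
   = a ^+ #|K| * (a + b) ^+ #|A :\: K|.
Proof.
move=> KA; rewrite -sum_subsets_exprD mulr_sumr.
rewrite (reindex_onto (fun E => K :|: E) (fun E => E :\: K)) /=; last first.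
  by move=> E /andP[_ KE]; rewrite -{1}(setIidPr KE) setID.
have sub_eq E : (K :|: E \subset A) && (K \subset K :|: E) && ((K :|: E) :\: K == E)
               = (E \subset A :\: K).
  apply/idP/idP => [/andP[/andP[KEA _] /eqP <-]|]; first exact: setSD.
  rewrite subsetD subUset KA subsetUl => /andP[-> KE] /=.
  by rewrite setDUl setDv set0U; apply/eqP/setDidPl.
apply: eq_big => [//|E]; rewrite sub_eq => EAK.
have [EA KE] : E \subset A /\ [disjoint E & K] by move: EAK; rewrite subsetD => /andP.
rewrite cardsU (disjoint_setI0 _) ?cards0 ?subn0; last by rewrite disjoint_sym.
by rewrite cardsD (setIidPr KA) exprD subnDA mulrA.
Qed.
End SubsetSums.

Section EdgesTouching.
Variable N : nat.

Lemma edges_touching_sub (E : {set {set 'I_N}}) (S T : {set 'I_N}) :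
  edges_touching N E S T \subset E.
Proof. by apply/subsetP => e; rewrite inE => /andP[]. Qed.

Lemma edges_touchingI (E : {set {set 'I_N}}) (S T : {set 'I_N}) : E \subset pairs N ->
  edges_touching N E S T = E :&: edges_touching N (pairs N) S T.
Proof.
move=> EP; apply/setP => e; rewrite !inE.
by case eE: (e \in E) => //=; have := subsetP EP e eE; rewrite inE => ->.
Qed.

Lemma card_edges_touching_pairs n (S T : {set 'I_N}) : #|S| = n -> #|T| = n ->
  (#|edges_touching N (pairs N) S T| <= 2 * n ^ 2)%N.
Proof.
move=> Sn Tn.
have sub : edges_touching N (pairs N) S T
    \subset [set e : {set 'I_N} | e \subset S :|: T & #|e| == 2%N].
  by apply/subsetP => e; rewrite !inE => /andP[-> /andP[-> _]].
apply: leq_trans (subset_leq_card sub) _; rewrite cards_draws.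
have STn : (#|S :|: T| <= n + n)%N by rewrite cardsU Sn Tn leq_subr.
by apply: leq_trans (leq_bin2l 2 STn) _; rewrite bin2; nia.
Qed.
End EdgesTouching.

Section RandomGraph.
Variables (R : realType) (N : nat) (p : R).
Hypothesis p01 : 0 <= p <= 1.

Local Notation graph := {set {set 'I_N}}.
Local Notation weight E := (p ^+ #|E| * (1 - p) ^+ (#|pairs N| - #|E|)).

Lemma gnp_weight_ge0 (E : graph) : 0 <= weight E.
Proof. by have [p0 p1] := andP p01; rewrite mulr_ge0 ?exprn_ge0 ?subr_ge0. Qed.

Lemma gnp_probE (A : pred graph) :
  gnp_prob N p A = \sum_(E : graph | E \subset pairs N) if A E then weight E else 0.
Proof. exact: big_mkcondr. Qed.

Lemma gnp_prob_ge0 (A : pred graph) : 0 <= gnp_prob N p A.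
Proof. by apply: sumr_ge0 => E _; apply: gnp_weight_ge0. Qed.

Lemma gnp_probC (A : pred graph) : gnp_prob N p A = 1 - gnp_prob N p (predC A).
Proof.
have <- : \sum_(E : graph | E \subset pairs N) weight E = 1.
  by rewrite sum_subsets_exprD subrKC expr1n.
by rewrite (bigID A) /= addrK.
Qed.

Lemma gnp_prob_le1 (A : pred graph) : gnp_prob N p A <= 1.
Proof. by rewrite gnp_probC lerBlDr lerDl gnp_prob_ge0. Qed.

Lemma gnp_prob_le (A B : pred graph) :
  (forall E : graph, E \subset pairs N -> A E -> B E) -> gnp_prob N p A <= gnp_prob N p B.
Proof.
move=> AB; rewrite !gnp_probE; apply: ler_sum => E EP.
by case: ifP => [/(AB E EP) ->|_]; last case: ifP => _; rewrite ?gnp_weight_ge0.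
Qed.

Lemma gnp_prob_exists {I : finType} (P : pred I) (A : I -> pred graph) :
  gnp_prob N p (fun E => [exists i, P i && A i E]) <= \sum_(i | P i) gnp_prob N p (A i).
Proof.
under [leRHS]eq_bigr do rewrite gnp_probE.
rewrite gnp_probE exchange_big /=; apply: ler_sum => E _.
have term_ge0 i : 0 <= (if A i E then weight E else 0).
  by case: ifP; rewrite ?gnp_weight_ge0.
case: ifP => [/existsP[i /andP[Pi AiE]] | _]; last exact: sumr_ge0.
by rewrite (bigD1 i) //= AiE lerDl sumr_ge0.
Qed.

Lemma gnp_prob_supset (K : graph) : K \subset pairs N ->
  gnp_prob N p (fun E => K \subset E) = p ^+ #|K|.
Proof. by move=> KP; rewrite /gnp_prob sum_supsets_exprD // subrKC expr1n mulr1. Qed.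

Lemma gnp_prob_tail (F : graph) k : F \subset pairs N ->
  gnp_prob N p (fun E => k <= #|E :&: F|)%N <= 'C(#|F|, k)%:R * p ^+ k.
Proof.
move=> FP; pose P (K : graph) := (K \subset F) && (#|K| == k).
have has_ksubset E : (k <= #|E :&: F|)%N -> [exists K, P K && (K \subset E)].
  rewrite -bin_gt0 -cards_draws => /card_gt0P[K].
  rewrite inE subsetI -andbA => /and3P[KE KF Kk].
  by apply/existsP; exists K; rewrite /P KF Kk KE.
have tail_le : gnp_prob N p (fun E => k <= #|E :&: F|)%N
    <= gnp_prob N p (fun E => [exists K, P K && (K \subset E)]).
  by apply: gnp_prob_le => E _ /has_ksubset.
apply: le_trans (le_trans tail_le (gnp_prob_exists P (fun K E => K \subset E))) _.
rewrite (eq_bigr (fun _ => p ^+ k)); last first.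
  move=> K /andP[KF /eqP <-]; exact/gnp_prob_supset/(subset_trans KF).
rewrite (eq_bigl [in [set K | P K]]) => [|K]; last by rewrite inE.
by rewrite sumr_const cards_draws mulr_natl.
Qed.

Lemma gnp_prob_not_good_union n (m : R) : 0 <= m ->
  gnp_prob N p (predC (good_event N n m))
  <= 'C(N, n)%:R ^+ 2 * ('C(2 * n ^ 2, (Num.truncn m).+1)%:R * p ^+ (Num.truncn m).+1).
Proof.
move=> m0; set k := (Num.truncn m).+1.
pose P (ST : {set 'I_N} * {set 'I_N}) := (#|ST.1| == n) && (#|ST.2| == n).
pose A ST (E : graph) := (k <= #|E :&: edges_touching N (pairs N) ST.1 ST.2|)%N.
have not_good_le : gnp_prob N p (predC (good_event N n m))
    <= gnp_prob N p (fun E => [exists ST, P ST && A ST E]).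
  apply: gnp_prob_le => E EP /forallPn[S /forallPn[T]].
  rewrite negb_imply -!andbA => /and4P[_ Sn Tn many].
  apply/existsP; exists (S, T); rewrite /P /A Sn Tn -edges_touchingI //=.
  by rewrite /k truncn_lt_nat // ltNge.
apply: le_trans (le_trans not_good_le (gnp_prob_exists P A)) _.
have tail_le ST : P ST -> gnp_prob N p (A ST) <= 'C(2 * n ^ 2, k)%:R * p ^+ k.
  case/andP => /eqP Sn /eqP Tn; rewrite /A.
  apply: le_trans (gnp_prob_tail _ _ (edges_touching_sub _ _ _ _)) _.
  have [p0 _] := andP p01.
  by rewrite ler_wpM2r ?exprn_ge0 // ler_nat leq_bin2l // card_edges_touching_pairs.
apply: le_trans (ler_sum _ tail_le) _; rewrite sumr_const.
have -> : #|[pred ST | P ST]|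
    = #|setX [set S : {set 'I_N} | #|S| == n] [set T : {set 'I_N} | #|T| == n]|.
  by apply: eq_card => -[S T]; rewrite !inE.
by rewrite cardsX card_draws card_ord -(mulr_natl _ ('C(N, n) * 'C(N, n))) natrM -expr2.
Qed.
End RandomGraph.

Lemma ffact_leq_expn M k : (M ^_ k <= M ^ k)%N.
Proof.
elim: k => [|k IH] //.
by rewrite ffactnSr expnSr leq_mul // leq_subr.
Qed.

Section Estimates.
Variable R : realType.

Lemma expR1_le4 : expR 1 <= 4 :> R.
Proof.
have half_le : 1 / 2 <= expR (- (1 / 2)) :> R by have := expR_ge1Dx (- (1 / 2) : R); lra.
have -> : expR 1 = (expR (- (1 / 2)) ^+ 2)^-1 :> R.
  by rewrite -expRM_natl -expRN; congr expR; lra.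
rewrite -[4]invrK lef_pV2 ?posrE ?exprn_gt0 ?expR_gt0 //; last lra.
rewrite expr2; nra.
Qed.

Lemma mul_expR1_le_expR (t : R) : expR 1 * t <= expR t.
Proof.
rewrite -[in expR t](subrK 1 t) expRD mulrC ler_wpM2r ?expR_ge0 //.
by have := expR_ge1Dx (t - 1); rewrite addrC subrK.
Qed.

Lemma expn_le_expR1_fact k : k%:R ^+ k <= expR 1 ^+ k * k`!%:R :> R.
Proof.
case: k => [|j]; first by rewrite !expr0 fact0 mulr1.
have := @expR_ge1Dxn R j.+1%:R j (ler0n _ _).
rewrite -(mulr1 j.+1%:R) expRM_natl mulr1 -ler_pdivrMr ?ltr0n ?fact_gt0 //; lra.
Qed.

Lemma bin_le_expR M k : 'C(M, k)%:R <= (expR 1 * M%:R / k%:R) ^+ k :> R.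
Proof.
case: k => [|j]; first by rewrite bin0 expr0.
set k := j.+1.
have Ck : 'C(M, k)%:R * k`!%:R <= M%:R ^+ k :> R.
  by rewrite -natrM -natrX ler_nat bin_ffact ffact_leq_expn.
rewrite expr_div_n ler_pdivlMr ?exprn_gt0 ?ltr0n //.
apply: le_trans (ler_wpM2l (ler0n _ _) (expn_le_expR1_fact k)) _.
by rewrite mulrCA exprMn ler_wpM2l // exprn_ge0 ?expR_ge0.
Qed.

Lemma div_ln_gt1 (x : R) : 1 < x / ln x -> 1 < x.
Proof.
apply: contraTT; rewrite -!leNgt => x_le1.
have [x_gt0|x_le0] := ltrP 0 x; last by rewrite ln0 // invr0 mulr0.
apply: le_trans ler01; apply: mulr_ge0_le0; first exact: ltW.
by rewrite invr_le0 ln_le0.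
Qed.

Lemma expR1_ln_div_le (x : R) : 1 < x ->
  expR 1 * ln x / (4 * x) <= expR (- (3 * ln x / 4)).
Proof.
move=> x_gt1; set y := ln x.
have x_gt0 : 0 < x := lt_trans ltr01 x_gt1.
have xE : x = expR (y / 4) * expR (3 * y / 4).
  by rewrite -expRD (_ : y / 4 + 3 * y / 4 = y) ?lnK //; lra.
have := mul_expR1_le_expR (y / 4).
rewrite expRN xE; set u := expR (y / 4); set v := expR (3 * y / 4) => e_le.
have [u_gt0 v_gt0] : 0 < u /\ 0 < v by split; apply: expR_gt0.
rewrite (_ : expR 1 * y / (4 * (u * v)) = expR 1 * (y / 4) / u / v); last first.
  by field; rewrite !gt_eqF.
by rewrite ler_pdivrMr // mulVf ?gt_eqF // ler_pdivrMr // mul1r.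
Qed.

Lemma bin_mul_expr_le M k [q c : R] : 0 <= q -> 0 < c -> c <= k%:R ->
  'C(M, k)%:R * q ^+ k <= (expR 1 * M%:R * q / c) ^+ k.
Proof.
move=> q_ge0 c_gt0 c_le_k.
apply: le_trans (ler_wpM2r (exprn_ge0 k q_ge0) (bin_le_expR M k)) _.
have eM_ge0 : 0 <= expR 1 * M%:R :> R := mulr_ge0 (expR_ge0 _) (ler0n _ _).
rewrite -exprMn; apply: lerXn2r; rewrite ?nnegrE.
- by rewrite mulr_ge0 ?divr_ge0.
- by apply: divr_ge0 (ltW c_gt0); apply: mulr_ge0.
rewrite mulrAC; apply: ler_wpM2l; first exact: mulr_ge0.
by rewrite lef_pV2 ?posrE // (lt_le_trans c_gt0 c_le_k).
Qed.
End Estimates.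

Definition beta_arg {R : realType} (N n : nat) (p : R) : R :=
  (n%:R * p)^-1 * ln (N%:R / n%:R).

Lemma beta_parE {R : realType} (N n : nat) (p : R) :
  beta_par N n p = beta_arg N n p / ln (beta_arg N n p).
Proof. by []. Qed.

Section LargeBeta.
Variables (R : realType) (N n : nat) (p : R).
Hypotheses (p_ge0 : 0 <= p) (n_gt0 : (0 < n)%N) (N_ge : (3 * n <= N)%N).
Hypothesis beta_gt1 : 1 < beta_par N n p.
Hypothesis p_le1 : p <= 1.

Local Notation beta := (beta_par N n p).
Local Notation z := (N%:R / n%:R : R).
Local Notation x := (beta_arg N n p).
Local Notation m := (8 * beta * n%:R ^+ 2 * p).
Local Notation k := (Num.truncn m).+1.

Lemma ratio_ge3 : 3 <= z.
Proof. by rewrite ler_pdivlMr ?ltr0n // -natrM ler_nat. Qed.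

Let ratio_gt0 : 0 < z := lt_le_trans (ltr0Sn _ 2) ratio_ge3.

Lemma beta_arg_gt1 : 1 < x.
Proof. by apply: div_ln_gt1; rewrite -beta_parE. Qed.

Lemma np_gt0 : 0 < n%:R * p.
Proof.
rewrite lt_neqAle mulr_ge0 // andbT eq_sym; apply/eqP => np0.
by have := beta_arg_gt1; rewrite /beta_arg np0 invr0 mul0r ltr10.
Qed.

Let natr_n_gt0 : 0 < n%:R :> R.
Proof. by rewrite ltr0n. Qed.

Lemma p_gt0 : 0 < p.
Proof. by rewrite -(pmulr_rgt0 _ natr_n_gt0) np_gt0. Qed.

Lemma ln_ratio_gt0 : 0 < ln z.
Proof. by apply: ln_gt0; apply: lt_le_trans ratio_ge3; rewrite ltr1n. Qed.

Lemma m_gt0 : 0 < m.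
Proof.
have beta_gt0 : 0 < beta := lt_trans ltr01 beta_gt1.
apply: mulr_gt0 p_gt0; apply: mulr_gt0 (exprn_gt0 _ natr_n_gt0).
exact: mulr_gt0.
Qed.

Lemma bin_sqr_le : 'C(N, n)%:R ^+ 2 <= ((expR 1 * z) ^+ 2) ^+ n.
Proof.
have bin_le : 'C(N, n)%:R <= (expR 1 * z) ^+ n by rewrite mulrA bin_le_expR.
rewrite -exprM mulnC exprM; apply: lerXn2r => //; rewrite nnegrE ?ler0n //.
exact: le_trans (ler0n _ _) bin_le.
Qed.

Lemma bin_tail_le : 'C(2 * n ^ 2, k)%:R * p ^+ k <= ((z ^+ 6)^-1) ^+ n.
Proof.
have n_neq0 := gt_eqF natr_n_gt0; have p_neq0 := gt_eqF p_gt0.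
have L_neq0 := gt_eqF ln_ratio_gt0.
set lnx := ln x; have lnx_gt0 : 0 < lnx := ln_gt0 beta_arg_gt1.
have lnx_neq0 := gt_eqF lnx_gt0.
have k_gt_m : m < k%:R by case/andP: (truncn_itv (ltW m_gt0)).
have ratioE : expR 1 * (2 * n ^ 2)%:R * p / m = expR 1 * lnx / (4 * x).
  rewrite natrM natrX beta_parE -/lnx /beta_arg; field.
  by rewrite p_neq0 n_neq0 L_neq0 lnx_neq0.
have mE : m * lnx = 8 * n%:R * ln z.
  by rewrite beta_parE -/lnx /beta_arg; field; rewrite p_neq0 n_neq0 lnx_neq0.
apply: le_trans (bin_mul_expr_le _ _ _ p_ge0 m_gt0 (ltW k_gt_m)) _.
rewrite ratioE; apply: (le_trans (y := expR (- (3 * lnx / 4)) ^+ k)).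
  have x_gt0 : 0 < x := lt_trans ltr01 beta_arg_gt1.
  have r_ge0 : 0 <= expR 1 * lnx / (4 * x).
    apply: divr_ge0 (mulr_ge0 (expR_ge0 _) (ltW lnx_gt0)) _.
    exact: mulr_ge0 (ler0n _ 4) (ltW x_gt0).
  by apply: lerXn2r; rewrite ?nnegrE ?expR_ge0 // expR1_ln_div_le // beta_arg_gt1.
rewrite -expRM_natl -[z in (z ^+ 6)^-1](lnK (ratio_gt0 : z \in Num.pos)).
rewrite -expRM_natl -expRN -expRM_natl ler_expR !mulrN lerN2.
have -> : n%:R * (6 * ln z) = m * (3 * lnx / 4) by lra.
by rewrite ler_pM2r ?ltW // divr_gt0 ?mulr_gt0.
Qed.

Lemma gnp_prob_not_good_le :
  gnp_prob N p (predC (good_event N n m)) <= (expR 1 ^+ 2 / 81) ^+ n.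
Proof.
have p01 : 0 <= p <= 1 by rewrite p_ge0 p_le1.
apply: le_trans (gnp_prob_not_good_union _ _ _ p01 n _ (ltW m_gt0)) _.
have C_ge0 : 0 <= 'C(N, n)%:R ^+ 2 :> R := sqr_ge0 _.
have T_ge0 : 0 <= 'C(2 * n ^ 2, k)%:R * p ^+ k := mulr_ge0 (ler0n _ _) (exprn_ge0 _ p_ge0).
apply: le_trans (ler_pM C_ge0 T_ge0 bin_sqr_le bin_tail_le) _.
rewrite -exprMn [(expR 1 * _) ^+ 2]exprMn -mulrA.
have -> : z ^+ 2 * (z ^+ 6)^-1 = (z ^+ 4)^-1.
  by rewrite (exprD _ 2 4) invfM mulrA mulfV ?mul1r // expf_neq0 // gt_eqF.
have z4_ge81 : 81 <= z ^+ 4.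
  have := @lerXn2r R 4 3 z; rewrite !nnegrE ler0n (le_trans _ ratio_ge3) //.
  by rewrite -natrX; apply; rewrite ?ratio_ge3.
apply: lerXn2r; rewrite ?nnegrE.
- exact: divr_ge0 (sqr_ge0 _) (exprn_ge0 _ (ltW ratio_gt0)).
- exact: divr_ge0 (sqr_ge0 _) (ler0n _ 81).
apply: ler_wpM2l; first exact: sqr_ge0.
by rewrite lef_pV2 ?posrE // (lt_le_trans _ z4_ge81).
Qed.
End LargeBeta.

Lemma expR1_sqr_div81_lt1 (R : realType) : `|expR 1 ^+ 2 / 81| < 1 :> R.
Proof.
have e_gt0 : 0 < expR 1 :> R := expR_gt0 1.
have := expR1_le4 R; rewrite ger0_norm ?divr_ge0 ?sqr_ge0 // ltr_pdivrMr //; nra.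
Qed.

Theorem lemma2p6 (R : realType) (N : nat -> nat) (p : nat -> R)
  (hp : forall n, 0 <= p n <= 1)
  (hN : \forall n \near \oo, (3 * n <= N n)%N)
  (hbeta : \forall n \near \oo, 1 < beta_par (N n) n (p n)) :
  (fun n => gnp_prob (N n) (p n)
              (good_event (N n) n (8 * beta_par (N n) n (p n) * n%:R ^+ 2 * p n)))
    @ \oo --> (1 : R).
Proof.
apply: (@squeeze_cvgr _ _ _ _ (fun n => 1 - (expR 1 ^+ 2 / 81) ^+ n) (fun=> 1)).
- near=> n.
  have n_gt0 : (0 < n)%N by near: n; exact: nbhs_infty_gt.
  have [p_ge0 p_le1] := andP (hp n).
  rewrite gnp_prob_le1 // andbT gnp_probC // lerD2l lerN2.
  by apply: gnp_prob_not_good_le => //; near: n.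
- rewrite -[X in _ --> X]subr0; apply: cvgB; first exact: cvg_cst.
  exact: cvg_expr (expR1_sqr_div81_lt1 R).
- exact: cvg_cst.
Unshelve. all: by end_near.
Qed.
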